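(* Let $0<q<1$ and let $n$ and $s_1,\dots,s_n$ be positive integers such that $s_j>1$ for some $j$. Then \[ \sum_{j=1}^n \zeta\big[s_j+1,s_{j+1},\dots,s_n,s_1,\dots,s_{j-1}\big] = \sum_{j=1}^n \sum_{k=0}^{s_j-2}\zeta\big[s_j-k,s_{j+1},\dots,s_n,s_1,\dots,s_{j-1},k+1\big], \] where the inner sum on the right is zero when $s_j=1$.
   Context: Fix $0<q<1$. For real $x$, $[x]_q := (1-q^x)/(1-q)$. For positive integers $t_1,\dots,t_N$ with $t_1>1$, $\zeta[t_1,\dots,t_N] := \sum_{k_1>\cdots>k_N>0}\prod_{j=1}^N q^{(t_j-1)k_j}/[k_j]_q^{t_j}$ (sum over positive integers). *)

From Stdlib Require Import Reals Lra Lia List.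
From Coquelicot Require Import Coquelicot.
Import ListNotations.
Open Scope R_scope.

Definition qint (q x : R) : R := (1 - Rpower q x) / (1 - q).

Definition qterm (q : R) (t k : nat) : R :=
  q ^ ((t - 1) * k) / (qint q (INR k)) ^ t.

(* Finite sum over M >= k_1 > k_2 > ... > k_N > 0. *)
Fixpoint qzeta_trunc (q : R) (M : nat) (ts : list nat) : R :=
  match ts with
  | [] => 1
  | t :: ts' =>
      fold_right Rplus 0
        (map (fun k => qterm q t k * qzeta_trunc q (k - 1)%nat ts') (seq 1 M))
  end.

(* zeta[t_1,...,t_N] := sum_{k_1 > ... > k_N > 0} prod_j q^((t_j-1)k_j)/[k_j]_q^{t_j},
   defined as the limit of the truncations k_1 <= M (nonnegative terms). *)
Definition qzeta (q : R) (ts : list nat) : R :=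
  real (Lim_seq (fun M => qzeta_trunc q M ts)).

Definition fsum (m : nat) (f : nat -> R) : R :=
  fold_right Rplus 0 (map f (seq 0 m)).

From Stdlib Require Import Reals Lra Lia List Arith.
From Coquelicot Require Import Coquelicot.
Import ListNotations.
Open Scope R_scope.

(* Write h(m) = q^m/[m]_q ([qratio]), so that the summand with exponent t+1 is the
   summand with exponent t times h(m).  For a > b >= 1 the partial-fraction identity
     sum_{k=0}^{s-2} qterm (s-k) a * qterm (k+1) b
       = qterm s b * (h(a-b) - h(a)) - qterm s a * h(a-b)
   shows that, truncated at k_1 <= N, the inner sum on the right for the j-th rotation
   of s equals the j-th term on the left, minus a "rotation term" of the j-th rotation,
   plus the rotation term of the (j+1)-th rotation at level N-1, minus a boundary term.
   Summed over the n rotations the rotation terms telescope; what is left is O(N^K q^N)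
   because some s_j > 1, so the identity follows as N -> infinity. *)

(* Same encoding as [fsum], so that [fsum n f] is convertible to [sum_from 0 n f]. *)
Definition sum_from (a n : nat) (f : nat -> R) : R :=
  fold_right Rplus 0 (map f (seq a n)).

Lemma sum_from_S_l a n f : sum_from a (S n) f = f a + sum_from (S a) n f.
Proof. reflexivity. Qed.

Lemma sum_from_S_r a n f : sum_from a (S n) f = sum_from a n f + f (a + n)%nat.
Proof.
  revert a; induction n; intros a.
  - cbn; rewrite Nat.add_0_r; ring.
  - rewrite (sum_from_S_l a (S n)), IHn, (sum_from_S_l a n), Nat.add_succ_r; cbn [Nat.add]; ring.
Qed.

Lemma sum_from_ext a n f g :
  (forall i, (a <= i < a + n)%nat -> f i = g i) -> sum_from a n f = sum_from a n g.
Proof.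
  revert a; induction n; intros a H; [reflexivity|].
  rewrite !sum_from_S_l, H by lia. f_equal. apply IHn; intros; apply H; lia.
Qed.

Lemma sum_from_plus a n f g :
  sum_from a n (fun i => f i + g i) = sum_from a n f + sum_from a n g.
Proof. revert a; induction n; intros a; [cbn; ring|]. rewrite !sum_from_S_l, IHn; ring. Qed.

Lemma sum_from_minus a n f g :
  sum_from a n (fun i => f i - g i) = sum_from a n f - sum_from a n g.
Proof. revert a; induction n; intros a; [cbn; ring|]. rewrite !sum_from_S_l, IHn; ring. Qed.

Lemma sum_from_scal_l a n c f :
  sum_from a n (fun i => c * f i) = c * sum_from a n f.
Proof. revert a; induction n; intros a; [cbn; ring|]. rewrite !sum_from_S_l, IHn; ring. Qed.

Lemma sum_from_zero a n : sum_from a n (fun _ => 0) = 0.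
Proof. revert a; induction n; intros a; [cbn; ring|]. rewrite !sum_from_S_l, IHn; ring. Qed.

Lemma sum_from_le a n f g :
  (forall i, (a <= i < a + n)%nat -> f i <= g i) -> sum_from a n f <= sum_from a n g.
Proof.
  revert a; induction n; intros a H; [cbn; lra|].
  rewrite !sum_from_S_l. apply Rplus_le_compat; [apply H; lia|]. apply IHn; intros; apply H; lia.
Qed.

Lemma sum_from_nonneg a n f :
  (forall i, (a <= i < a + n)%nat -> 0 <= f i) -> 0 <= sum_from a n f.
Proof. intros H. rewrite <- (sum_from_zero a n). now apply sum_from_le. Qed.

Lemma sum_from_le_const a n f c :
  (forall i, (a <= i < a + n)%nat -> f i <= c) -> sum_from a n f <= INR n * c.
Proof.
  revert a; induction n; intros a H; [cbn; lra|].
  rewrite sum_from_S_l, S_INR.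
  assert (f a <= c) by (apply H; lia).
  assert (sum_from (S a) n f <= INR n * c) by (apply IHn; intros; apply H; lia).
  lra.
Qed.

Lemma sum_from_shift a n f : sum_from (S a) n f = sum_from a n (fun i => f (S i)).
Proof. revert a; induction n; intros a; [reflexivity|]. now rewrite !sum_from_S_l, IHn. Qed.

Lemma sum_from_comm a n b m (F : nat -> nat -> R) :
  sum_from a n (fun i => sum_from b m (F i))
  = sum_from b m (fun k => sum_from a n (fun i => F i k)).
Proof.
  revert a; induction n; intros a.
  - symmetry; apply sum_from_zero.
  - rewrite sum_from_S_l, IHn, <- sum_from_plus. reflexivity.
Qed.

Lemma sum_from_telescope n (f : nat -> R) :
  sum_from 0 n (fun i => f (S i) - f i) = f n - f O.
Proof. induction n; [cbn; ring|]. rewrite sum_from_S_r, IHn; cbn; ring. Qed.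

Lemma sum_from_sum_f_R0 n f : sum_from 0 (S n) f = sum_f_R0 f n.
Proof. induction n; [cbn; ring|]. now rewrite sum_from_S_r, IHn. Qed.

Lemma sum_from_triangle N (F : nat -> nat -> R) :
  sum_from 1 N (fun m => sum_from 1 (m - 1) (F m))
  = sum_from 1 (N - 1) (fun k => sum_from (S k) (N - k) (fun m => F m k)).
Proof.
  assert (Hfull : forall N, sum_from 1 N (fun m => sum_from 1 (m - 1) (F m))
                  = sum_from 1 N (fun k => sum_from (S k) (N - k) (fun m => F m k))).
  { clear N; induction N; [reflexivity|].
    rewrite !sum_from_S_r, IHN. replace (1 + N - 1)%nat with N by lia.
    rewrite (sum_from_ext 1 N (fun k => sum_from (S k) (S N - k) (fun m => F m k))
               (fun k => sum_from (S k) (N - k) (fun m => F m k) + F (S N) k)).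
    - change (1 + N)%nat with (S N). rewrite sum_from_plus, Nat.sub_diag.
      cbn [sum_from seq map fold_right]; ring.
    - intros k Hk. replace (S N - k)%nat with (S (N - k)) by lia.
      rewrite sum_from_S_r. do 3 f_equal. lia. }
  rewrite Hfull. destruct N as [|N]; [reflexivity|].
  rewrite sum_from_S_r. replace (S N - 1)%nat with N by lia.
  replace (S N - (1 + N))%nat with O by lia. cbn [sum_from seq map fold_right]. ring.
Qed.

Lemma sum_from_rotate n (f : nat -> R) :
  f n = f O -> sum_from 0 n (fun j => f (S j)) = sum_from 0 n f.
Proof.
  intros H. rewrite <- sum_from_shift.
  pose proof (sum_from_S_l 0 n f) as Hl. rewrite sum_from_S_r in Hl. cbn [Nat.add] in Hl. lra.
Qed.

Lemma is_lim_seq_sum_from a n (u : nat -> nat -> R) (l : nat -> R) :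
  (forall j, (a <= j < a + n)%nat -> is_lim_seq (u j) (l j)) ->
  is_lim_seq (fun N => sum_from a n (fun j => u j N)) (sum_from a n l).
Proof.
  revert a; induction n; intros a H.
  - apply is_lim_seq_const.
  - apply is_lim_seq_plus'; [apply H; lia|]. apply IHn; intros; apply H; lia.
Qed.

Definition qratio (q : R) (m : nat) : R := q ^ m / qint q (INR m).

Section QTerms.

Variable q : R.
Hypothesis q_pos : 0 < q.
Hypothesis q_lt_1 : q < 1.

Lemma pow_q_lt_1 m : (1 <= m)%nat -> q ^ m < 1.
Proof. intros Hm. apply pow_lt_1_compat; [lra|lia]. Qed.

Lemma pow_q_le_1 m : q ^ m <= 1.
Proof. destruct m; [simpl; lra|]. left; apply pow_q_lt_1; lia. Qed.

Lemma pow_q_le a b : (a <= b)%nat -> q ^ b <= q ^ a.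
Proof.
  intros Hab. replace b with (a + (b - a))%nat by lia. rewrite pow_add.
  assert (0 < q ^ a) by (apply pow_lt; lra).
  pose proof (pow_q_le_1 (b - a)). nra.
Qed.

Lemma qint_INR m : qint q (INR m) = (1 - q ^ m) / (1 - q).
Proof. unfold qint. now rewrite Rpower_pow. Qed.

Lemma qint_ge_1 m : (1 <= m)%nat -> 1 <= qint q (INR m).
Proof.
  intros Hm. rewrite qint_INR. apply Rle_div_r; [lra|].
  pose proof (pow_q_le 1 m Hm). simpl in *. lra.
Qed.

Lemma qterm_nonneg t m : (1 <= m)%nat -> 0 <= qterm q t m.
Proof.
  intros Hm. pose proof (qint_ge_1 m Hm). unfold qterm.
  apply Rdiv_le_0_compat; [apply pow_le; lra|apply pow_lt; lra].
Qed.

Lemma qterm_le_pow t m : (1 <= m)%nat -> qterm q t m <= q ^ ((t - 1) * m).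
Proof.
  intros Hm. pose proof (qint_ge_1 m Hm). unfold qterm.
  pose proof (pow_R1_Rle _ t H).
  apply Rle_div_l; [lra|].
  assert (0 < q ^ ((t - 1) * m)) by (apply pow_lt; lra). nra.
Qed.

Lemma qterm_le_1 t m : (1 <= m)%nat -> qterm q t m <= 1.
Proof. intros Hm. eapply Rle_trans; [apply qterm_le_pow, Hm|apply pow_q_le_1]. Qed.

Lemma qterm_le_pow_index t m : (1 <= m)%nat -> (2 <= t)%nat -> qterm q t m <= q ^ m.
Proof. intros Hm Ht. eapply Rle_trans; [apply qterm_le_pow, Hm|apply pow_q_le; nia]. Qed.

Lemma qratio_0 : qratio q 0 = 0.
Proof.
  unfold qratio. rewrite qint_INR. simpl. unfold Rdiv.
  rewrite Rminus_diag, Rmult_0_l, Rinv_0. ring.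
Qed.

Lemma qratio_nonneg m : 0 <= qratio q m.
Proof.
  destruct m; [rewrite qratio_0; lra|].
  pose proof (qint_ge_1 (S m) ltac:(lia)).
  apply Rdiv_le_0_compat; [apply pow_le|]; lra.
Qed.

Lemma qratio_le_pow m : qratio q m <= q ^ m.
Proof.
  destruct m; [rewrite qratio_0; simpl; lra|].
  pose proof (qint_ge_1 (S m) ltac:(lia)).
  assert (0 < q ^ S m) by (apply pow_lt; lra).
  apply Rle_div_l; [lra|]. nra.
Qed.

Lemma qterm_succ t m : (1 <= t)%nat -> qterm q (S t) m = qterm q t m * qratio q m.
Proof.
  intros Ht. unfold qterm, qratio.
  replace ((S t - 1) * m)%nat with ((t - 1) * m + m)%nat by nia.
  rewrite pow_add. simpl (_ ^ S t). unfold Rdiv. rewrite Rinv_mult. ring.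
Qed.

Lemma qterm_1 m : (1 <= m)%nat -> qterm q 1 m = (1 - q) / (1 - q ^ m).
Proof.
  intros Hm. pose proof (pow_q_lt_1 m Hm).
  unfold qterm. rewrite qint_INR, Nat.sub_diag. simpl. field. lra.
Qed.

Lemma qratio_eq m : (1 <= m)%nat -> qratio q m = q ^ m * (1 - q) / (1 - q ^ m).
Proof.
  intros Hm. pose proof (pow_q_lt_1 m Hm).
  unfold qratio. rewrite qint_INR. field. lra.
Qed.

Section PartialFractions.

Variables a b : nat.
Hypothesis b_pos : (1 <= b)%nat.
Hypothesis b_lt_a : (b < a)%nat.

Let pow_split : q ^ a = q ^ b * q ^ (a - b).
Proof. rewrite <- pow_add. f_equal. lia. Qed.

Lemma qratio_partial_fractions_base :
  qterm q 1 b * (qratio q (a - b) - qratio q a) = qterm q 1 a * qratio q (a - b).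
Proof.
  pose proof (pow_q_lt_1 a ltac:(lia)). pose proof (pow_q_lt_1 b b_pos).
  pose proof (pow_q_lt_1 (a - b) ltac:(lia)).
  rewrite !qterm_1, !qratio_eq by lia. rewrite pow_split in *. field. lra.
Qed.

Lemma qratio_partial_fractions_step :
  qratio q b * (qratio q (a - b) - qratio q a)
  = qratio q a * (qratio q (a - b) - qratio q a + qterm q 1 a).
Proof.
  pose proof (pow_q_lt_1 a ltac:(lia)). pose proof (pow_q_lt_1 b b_pos).
  pose proof (pow_q_lt_1 (a - b) ltac:(lia)).
  rewrite !qterm_1, !qratio_eq by lia. rewrite pow_split in *. field. lra.
Qed.

End PartialFractions.

Lemma qterm_partial_fractions s a b :
  (1 <= s)%nat -> (1 <= b)%nat -> (b < a)%nat ->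
  sum_from 0 (s - 1) (fun k => qterm q (s - k) a * qterm q (k + 1) b)
  = qterm q s b * (qratio q (a - b) - qratio q a) - qterm q s a * qratio q (a - b).
Proof.
  intros Hs Hb Hab. induction s as [|s IH]; [lia|].
  destruct s as [|s].
  - cbn. rewrite <- qratio_partial_fractions_base by lia. ring.
  - replace (S (S s) - 1)%nat with (S s) by lia.
    rewrite sum_from_S_r, Nat.add_0_l, Nat.add_1_r.
    replace (S (S s) - s)%nat with 2%nat by lia.
    rewrite (sum_from_ext 0 s _ (fun k => qratio q a * (qterm q (S s - k) a * qterm q (k + 1) b))).
    2: { intros k Hk. replace (S (S s) - k)%nat with (S (S s - k)) by lia.
         rewrite qterm_succ by lia. ring. }
    replace (S s - 1)%nat with s in IH by lia. rewrite sum_from_scal_l, IH by lia.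
    rewrite !(qterm_succ (S s)), (qterm_succ 1 a) by lia.
    replace (qterm q (S s) b * qratio q b * (qratio q (a - b) - qratio q a))
      with (qterm q (S s) b * (qratio q b * (qratio q (a - b) - qratio q a))) by ring.
    rewrite qratio_partial_fractions_step by lia. ring.
Qed.

End QTerms.

(* [qnest q M [t_1; ...; t_N] g] is the sum over M >= k_1 > ... > k_N > 0 of
   qterm t_1 k_1 * ... * qterm t_N k_N * g (k_N - 1), and g M when N = 0. *)
Fixpoint qnest (q : R) (M : nat) (ts : list nat) (g : nat -> R) : R :=
  match ts with
  | [] => g M
  | t :: ts' => sum_from 1 M (fun k => qterm q t k * qnest q (k - 1) ts' g)
  end.

Section NestedSums.

Variable q : R.

Lemma qzeta_trunc_qnest M ts : qzeta_trunc q M ts = qnest q M ts (fun _ => 1).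
Proof.
  revert M; induction ts as [|t ts IH]; intros M; [reflexivity|].
  cbn [qzeta_trunc qnest]. unfold sum_from. f_equal. apply map_ext. intros k. now rewrite IH.
Qed.

Lemma qnest_ext M ts g h :
  (forall B, (B <= M)%nat -> g B = h B) -> qnest q M ts g = qnest q M ts h.
Proof.
  revert M; induction ts as [|t ts IH]; intros M H; cbn; [apply H; lia|].
  apply sum_from_ext. intros k Hk. f_equal. apply IH. intros; apply H; lia.
Qed.

Lemma qnest_plus M ts g h :
  qnest q M ts (fun B => g B + h B) = qnest q M ts g + qnest q M ts h.
Proof.
  revert M; induction ts as [|t ts IH]; intros M; cbn; [reflexivity|].
  rewrite <- sum_from_plus. apply sum_from_ext. intros. rewrite IH. ring.
Qed.

Lemma qnest_scal_l M ts c g : qnest q M ts (fun B => c * g B) = c * qnest q M ts g.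
Proof.
  revert M; induction ts as [|t ts IH]; intros M; cbn; [reflexivity|].
  rewrite <- sum_from_scal_l. apply sum_from_ext. intros. rewrite IH. ring.
Qed.

Lemma qnest_minus M ts g h :
  qnest q M ts (fun B => g B - h B) = qnest q M ts g - qnest q M ts h.
Proof.
  rewrite (qnest_ext M ts _ (fun B => g B + (-1) * h B)) by (intros; ring).
  rewrite qnest_plus, qnest_scal_l. ring.
Qed.

Lemma qnest_sum_from M ts a n (G : nat -> nat -> R) :
  qnest q M ts (fun B => sum_from a n (fun j => G j B))
  = sum_from a n (fun j => qnest q M ts (G j)).
Proof.
  revert a; induction n as [|n IH]; intros a.
  - rewrite (qnest_ext M ts _ (fun B => 0 * 0)) by (intros; cbn; ring).
    rewrite qnest_scal_l. cbn; ring.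
  - rewrite sum_from_S_l, <- IH, <- qnest_plus. now apply qnest_ext.
Qed.

Lemma qnest_app M ts ts' g : qnest q M (ts ++ ts') g = qnest q M ts (fun B => qnest q B ts' g).
Proof.
  revert M; induction ts as [|t ts IH]; intros M; cbn; [reflexivity|].
  apply sum_from_ext. intros. now rewrite IH.
Qed.

End NestedSums.

Lemma pow_INR_le a b n : (a <= b)%nat -> INR a ^ n <= INR b ^ n.
Proof. intros Hab. apply pow_incr. split; [apply pos_INR|now apply le_INR]. Qed.

Section NestedBounds.

Variable q : R.
Hypothesis q_pos : 0 < q.
Hypothesis q_lt_1 : q < 1.

Lemma qnest_nonneg M ts g : (forall B, (B <= M)%nat -> 0 <= g B) -> 0 <= qnest q M ts g.
Proof.
  revert M; induction ts as [|t ts IH]; intros M H; cbn; [apply H; lia|].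
  apply sum_from_nonneg. intros k Hk. apply Rmult_le_pos.
  - apply qterm_nonneg; auto; lia.
  - apply IH. intros; apply H; lia.
Qed.

Lemma qnest_cons_le M t ts g c :
  (forall k, (1 <= k <= M)%nat -> qterm q t k * qnest q (k - 1) ts g <= c) ->
  qnest q M (t :: ts) g <= INR M * c.
Proof. intros H. apply sum_from_le_const. intros; apply H; lia. Qed.

Lemma qnest_le_uniform M ts g C :
  (forall B, (B <= M)%nat -> 0 <= g B <= C) -> qnest q M ts g <= INR M ^ length ts * C.
Proof.
  revert M; induction ts as [|t ts IH]; intros M H; cbn [qnest length pow].
  { rewrite Rmult_1_l. apply H; lia. }
  rewrite Rmult_assoc. apply qnest_cons_le. intros k Hk.
  assert (HQ : qnest q (k - 1) ts g <= INR (k - 1) ^ length ts * C)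
    by (apply IH; intros; apply H; lia).
  assert (0 <= qnest q (k - 1) ts g) by (apply qnest_nonneg; intros; apply H; lia).
  pose proof (qterm_nonneg q q_pos q_lt_1 t k ltac:(lia)).
  pose proof (qterm_le_1 q q_pos q_lt_1 t k ltac:(lia)).
  pose proof (pow_INR_le (k - 1) M (length ts) ltac:(lia)).
  assert (0 <= C) by (pose proof (H M ltac:(lia)); lra).
  assert (0 <= INR (k - 1) ^ length ts) by (apply pow_le, pos_INR).
  nra.
Qed.

Section GeometricWeight.

Variables (G : R) (g : nat -> R).

Lemma qnest_le_geometric M ts :
  (forall B, (B <= M)%nat -> 0 <= g B /\ g B * q ^ B <= G) ->
  q ^ M * qnest q M ts g <= INR M ^ length ts * G.
Proof.
  revert M; induction ts as [|t ts IH]; intros M H; cbn [qnest length pow].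
  { rewrite Rmult_1_l, Rmult_comm. apply H; lia. }
  rewrite <- sum_from_scal_l, Rmult_assoc. apply sum_from_le_const. intros k Hk.
  assert (HQ : q ^ (k - 1) * qnest q (k - 1) ts g <= INR (k - 1) ^ length ts * G)
    by (apply IH; intros; apply H; lia).
  assert (0 <= qnest q (k - 1) ts g) by (apply qnest_nonneg; intros; apply H; lia).
  pose proof (qterm_nonneg q q_pos q_lt_1 t k ltac:(lia)).
  pose proof (qterm_le_1 q q_pos q_lt_1 t k ltac:(lia)).
  pose proof (pow_q_le q q_pos q_lt_1 (k - 1) M ltac:(lia)).
  pose proof (pow_INR_le (k - 1) M (length ts) ltac:(lia)).
  assert (0 <= G) by (destruct (H M ltac:(lia)); pose proof (pow_lt q M q_pos); nra).
  assert (0 <= INR (k - 1) ^ length ts) by (apply pow_le, pos_INR).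
  assert (0 <= q ^ M) by (apply pow_le; lra).
  assert (q ^ M * (qterm q t k * qnest q (k - 1) ts g) <= q ^ (k - 1) * qnest q (k - 1) ts g)
    by (apply Rmult_le_compat; nra).
  nra.
Qed.

Lemma qnest_le_exists M ts :
  Exists (fun t => (1 < t)%nat) ts ->
  (forall B, (B <= M)%nat -> 0 <= g B /\ g B * q ^ B <= G) ->
  qnest q M ts g <= INR M ^ length ts * G.
Proof.
  revert M; induction ts as [|t ts IH]; intros M Hex H; [inversion Hex|].
  cbn [length pow]. rewrite Rmult_assoc. apply qnest_cons_le. intros k Hk.
  assert (0 <= qnest q (k - 1) ts g) by (apply qnest_nonneg; intros; apply H; lia).
  pose proof (qterm_nonneg q q_pos q_lt_1 t k ltac:(lia)).
  pose proof (pow_INR_le (k - 1) M (length ts) ltac:(lia)).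
  assert (0 <= G) by (destruct (H M ltac:(lia)); pose proof (pow_lt q M q_pos); nra).
  assert (0 <= INR (k - 1) ^ length ts) by (apply pow_le, pos_INR).
  destruct (le_lt_dec 2 t) as [Ht|Ht].
  - (* the factor q^k from qterm pays for the growth of g *)
    assert (HQ : q ^ (k - 1) * qnest q (k - 1) ts g <= INR (k - 1) ^ length ts * G)
      by (apply qnest_le_geometric; intros; apply H; lia).
    pose proof (qterm_le_pow_index q q_pos q_lt_1 t k ltac:(lia) Ht).
    replace (q ^ k) with (q * q ^ (k - 1)) in *
      by (replace k with (S (k - 1)) at 2 by lia; reflexivity).
    assert (qterm q t k * qnest q (k - 1) ts g <= q * (q ^ (k - 1) * qnest q (k - 1) ts g))
      by (rewrite <- Rmult_assoc; apply Rmult_le_compat_r; assumption).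
    assert (INR (k - 1) ^ length ts * G <= INR M ^ length ts * G)
      by (apply Rmult_le_compat_r; assumption).
    assert (0 <= INR (k - 1) ^ length ts * G) by (apply Rmult_le_pos; assumption).
    nra.
  - assert (Hex' : Exists (fun t => (1 < t)%nat) ts)
      by (inversion Hex; [lia|assumption]).
    assert (HQ : qnest q (k - 1) ts g <= INR (k - 1) ^ length ts * G)
      by (apply IH; auto; intros; apply H; lia).
    pose proof (qterm_le_1 q q_pos q_lt_1 t k ltac:(lia)).
    nra.
Qed.

End GeometricWeight.

End NestedBounds.

Definition hsum (q : R) (m B : nat) : R := sum_from 0 (S B) (fun b => qratio q (m - b)).

Definition rotation_term (q : R) (N : nat) (ts : list nat) : R :=
  match ts with
  | [] => 0
  | t :: ts' => sum_from 1 N (fun m => qterm q t m * qnest q (m - 1) ts' (hsum q m))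
  end.

Definition boundary_term (q : R) (N : nat) (ts : list nat) : R :=
  match ts with
  | [] => 0
  | t :: ts' => qnest q (N - 1) (ts' ++ [t]) (hsum q N)
  end.

Definition rotation_error (q : R) (N : nat) (ts : list nat) : R :=
  rotation_term q (S N) ts - rotation_term q N ts + boundary_term q (S N) ts.

Lemma qratio_telescope q b k d : (b <= k)%nat ->
  sum_from (S k) d (fun m => qratio q (m - b) - qratio q m)
  = sum_from 0 b (fun c => qratio q (k - c) - qratio q (k + d - c)).
Proof.
  intros Hbk. induction d as [|d IH].
  - transitivity (sum_from 0 b (fun _ => 0)); [symmetry; apply sum_from_zero|].
    apply sum_from_ext. intros. rewrite Nat.add_0_r. ring.
  - rewrite sum_from_S_r, IH.
    rewrite (sum_from_ext 0 b (fun c => qratio q (k - c) - qratio q (k + S d - c))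
      (fun c => (qratio q (k - c) - qratio q (k + d - c))
              + (qratio q (k + S d - S c) - qratio q (k + S d - c)))).
    2: { intros c Hc. replace (k + S d - S c)%nat with (k + d - c)%nat by lia. ring. }
    rewrite sum_from_plus, (sum_from_telescope b (fun c => qratio q (k + S d - c))).
    replace (S k + d - b)%nat with (k + S d - b)%nat by lia.
    replace (S k + d)%nat with (k + S d - 0)%nat by lia. ring.
Qed.

Lemma hsum_telescope q b k N : (1 <= b <= k)%nat -> (k <= N)%nat ->
  sum_from (S k) (N - k) (fun m => qratio q (m - b) - qratio q m)
  = hsum q k (b - 1) - hsum q N (b - 1).
Proof.
  intros Hb HkN. unfold hsum. replace (S (b - 1)) with b by lia.
  rewrite qratio_telescope, sum_from_minus by lia.
  now replace (k + (N - k))%nat with N by lia.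
Qed.

Section CyclicStep.

Variable q : R.
Hypothesis q_pos : 0 < q.
Hypothesis q_lt_1 : q < 1.
Variable s1 : nat.
Hypothesis s1_pos : (1 <= s1)%nat.

Lemma qnest_sum_partial_fractions rest N :
  sum_from 0 (s1 - 1) (fun k => qnest q N ((s1 - k)%nat :: rest ++ [(k + 1)%nat]) (fun _ => 1))
  = sum_from 1 N (fun m => qnest q (m - 1) rest (fun B => sum_from 1 B (fun b =>
      qterm q s1 b * (qratio q (m - b) - qratio q m) - qterm q s1 m * qratio q (m - b)))).
Proof.
  cbn [qnest]. rewrite sum_from_comm. apply sum_from_ext. intros m Hm.
  rewrite (sum_from_ext 0 (s1 - 1) _ (fun k => qnest q (m - 1) rest
             (fun B => sum_from 1 B (fun b => qterm q (s1 - k) m * qterm q (k + 1) b)))).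
  2: { intros k Hk. rewrite qnest_app, <- qnest_scal_l. apply qnest_ext. intros B HB.
       cbn [qnest]. rewrite <- sum_from_scal_l. apply sum_from_ext. intros; ring. }
  rewrite <- qnest_sum_from. apply qnest_ext. intros B HB.
  rewrite sum_from_comm. apply sum_from_ext. intros b Hb.
  apply qterm_partial_fractions; auto; lia.
Qed.

Lemma rotation_term_cons rest N :
  rotation_term q N (s1 :: rest)
  = qnest q N (S s1 :: rest) (fun _ => 1)
    + sum_from 1 N (fun m => qterm q s1 m * qnest q (m - 1) rest
                               (fun B => sum_from 1 B (fun b => qratio q (m - b)))).
Proof.
  cbn [rotation_term qnest]. rewrite <- sum_from_plus. apply sum_from_ext. intros m Hm.
  rewrite (qnest_ext q (m - 1) rest (hsum q m)
             (fun B => qratio q m * 1 + sum_from 1 B (fun b => qratio q (m - b)))).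
  2: { intros B HB. unfold hsum. rewrite sum_from_S_l, Nat.sub_0_r. ring. }
  rewrite qnest_plus, qnest_scal_l, qterm_succ by assumption. ring.
Qed.

Lemma weight_telescope k B N : (B < k)%nat -> (k <= N)%nat ->
  sum_from (S k) (N - k) (fun m =>
    sum_from 1 B (fun b => qterm q s1 b * (qratio q (m - b) - qratio q m)))
  = qnest q B [s1] (hsum q k) - qnest q B [s1] (hsum q N).
Proof.
  intros HBk HkN. cbn [qnest]. rewrite sum_from_comm, <- sum_from_minus.
  apply sum_from_ext. intros b Hb.
  rewrite sum_from_scal_l, hsum_telescope by lia. ring.
Qed.

Lemma qnest_sum_telescope rest N :
  sum_from 1 N (fun m => qnest q (m - 1) rest (fun B =>
    sum_from 1 B (fun b => qterm q s1 b * (qratio q (m - b) - qratio q m))))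
  = rotation_term q (N - 1) (rest ++ [s1]) - boundary_term q N (s1 :: rest).
Proof.
  destruct rest as [|r rest]; cbn [qnest rotation_term boundary_term app];
    rewrite sum_from_triangle, <- sum_from_minus; apply sum_from_ext; intros k Hk.
  - rewrite sum_from_scal_l, hsum_telescope by lia. ring.
  - rewrite sum_from_scal_l, <- qnest_sum_from, !qnest_app, <- Rmult_minus_distr_l, <- qnest_minus.
    f_equal. apply qnest_ext. intros B HB. apply weight_telescope; lia.
Qed.

Lemma qnest_cyclic_step rest N :
  sum_from 0 (s1 - 1) (fun k => qnest q N ((s1 - k)%nat :: rest ++ [(k + 1)%nat]) (fun _ => 1))
  = qnest q N (S s1 :: rest) (fun _ => 1) - rotation_term q N (s1 :: rest)
    + rotation_term q (N - 1) (rest ++ [s1]) - boundary_term q N (s1 :: rest).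
Proof.
  rewrite qnest_sum_partial_fractions.
  rewrite (sum_from_ext 1 N _ (fun m =>
    qnest q (m - 1) rest (fun B =>
      sum_from 1 B (fun b => qterm q s1 b * (qratio q (m - b) - qratio q m)))
    - qterm q s1 m * qnest q (m - 1) rest (fun B => sum_from 1 B (fun b => qratio q (m - b))))).
  2: { intros m Hm. rewrite <- qnest_scal_l, <- qnest_minus. apply qnest_ext. intros B HB.
       rewrite <- sum_from_scal_l, <- sum_from_minus. apply sum_from_ext. intros; ring. }
  rewrite sum_from_minus, qnest_sum_telescope, rotation_term_cons. ring.
Qed.

End CyclicStep.

Lemma is_lim_seq_succ_ratio : is_lim_seq (fun n => INR (S (S n)) / INR (S n)) 1.
Proof.
  apply (is_lim_seq_ext (fun n => 1 + / INR (S n))).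
  { intros n. rewrite (S_INR (S n)). field. apply not_0_INR. lia. }
  replace (Finite 1) with (Finite (1 + 0)) by (f_equal; ring).
  apply is_lim_seq_plus'; [apply is_lim_seq_const|].
  apply (is_lim_seq_inv _ p_infty); [|discriminate].
  now apply -> is_lim_seq_incr_1; apply is_lim_seq_INR.
Qed.

Section Convergence.

Variable q : R.
Hypothesis q_pos : 0 < q.
Hypothesis q_lt_1 : q < 1.

Lemma ex_series_pow_geometric K : ex_series (fun n => INR (S n) ^ K * q ^ n).
Proof.
  assert (Hpos : forall n, 0 < INR (S n) ^ K * q ^ n)
    by (intros n; apply Rmult_lt_0_compat; apply pow_lt; [apply lt_0_INR; lia|lra]).
  apply (ex_series_ext (fun n => Rabs (INR (S n) ^ K * q ^ n))).
  { intros n. apply Rabs_pos_eq, Rlt_le, Hpos. }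
  apply ex_series_DAlembert with q; [lra|intros n; apply Rgt_not_eq, Hpos|].
  apply (is_lim_seq_ext (fun n => (INR (S (S n)) / INR (S n)) ^ K * q)).
  { intros n. rewrite Rabs_pos_eq.
    - unfold Rdiv. rewrite Rpow_mult_distr, pow_inv. cbn [pow].
      field. split; apply pow_nonzero; [lra|apply not_0_INR; lia].
    - apply Rdiv_le_0_compat; [apply Rlt_le|]; apply Hpos. }
  assert (Hcont : continuity_pt (fun x => x ^ K * q) 1)
    by (apply derivable_continuous_pt; auto_derive; trivial).
  pose proof (is_lim_seq_continuous _ _ _ Hcont is_lim_seq_succ_ratio) as Hlim.
  cbv beta in Hlim. now rewrite pow1, Rmult_1_l in Hlim.
Qed.

Lemma qnest_is_lim_qzeta t ts : (2 <= t)%nat ->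
  is_lim_seq (fun M => qnest q M (t :: ts) (fun _ => 1)) (qzeta q (t :: ts)).
Proof.
  intros Ht.
  set (b := fun i => qterm q t (S i) * qnest q i ts (fun _ => 1)).
  assert (Hb : ex_series b).
  { apply (@ex_series_le R_AbsRing R_CompleteNormedModule _
             (fun i => q * (INR (S i) ^ length ts * q ^ i))).
    2: exact (ex_series_scal_l q _ (ex_series_pow_geometric (length ts))).
    intros i. change norm with Rabs. unfold b. rewrite Rabs_pos_eq.
    - pose proof (qterm_nonneg q q_pos q_lt_1 t (S i) ltac:(lia)).
      pose proof (qterm_le_pow_index q q_pos q_lt_1 t (S i) ltac:(lia) Ht).
      assert (0 <= qnest q i ts (fun _ => 1)) by (apply qnest_nonneg; auto; intros; lra).
      assert (qnest q i ts (fun _ => 1) <= INR (S i) ^ length ts).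
      { rewrite <- (Rmult_1_r (INR (S i) ^ _)).
        eapply Rle_trans; [apply (qnest_le_uniform q q_pos q_lt_1 i ts _ 1); intros; lra|].
        apply Rmult_le_compat_r; [lra|apply pow_INR_le; lia]. }
      replace (q * (INR (S i) ^ length ts * q ^ i)) with (q ^ S i * INR (S i) ^ length ts)
        by (cbn [pow]; ring).
      now apply Rmult_le_compat.
    - apply Rmult_le_pos; [apply qterm_nonneg; auto; lia|apply qnest_nonneg; auto; intros; lra]. }
  destruct Hb as [l Hl].
  assert (Hlim : is_lim_seq (fun M => qnest q M (t :: ts) (fun _ => 1)) l).
  { apply is_lim_seq_incr_1, (is_lim_seq_ext (sum_n b)); [|exact Hl].
    intros n. rewrite sum_n_Reals, <- sum_from_sum_f_R0. cbn [qnest].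
    rewrite sum_from_shift. apply sum_from_ext. intros i Hi. unfold b. now rewrite Nat.sub_1_r. }
  unfold qzeta. rewrite (Lim_seq_ext _ _ (fun M => qzeta_trunc_qnest q M (t :: ts))).
  now rewrite (is_lim_seq_unique _ _ Hlim).
Qed.

End Convergence.

Lemma rotation_term_succ q t ts N :
  rotation_term q (S N) (t :: ts) - rotation_term q N (t :: ts)
  = qterm q t (S N) * qnest q N ts (hsum q (S N)).
Proof.
  cbn [rotation_term]. rewrite sum_from_S_r. replace (1 + N - 1)%nat with N by lia. cbn. ring.
Qed.

Section ErrorBounds.

Variable q : R.
Hypothesis q_pos : 0 < q.
Hypothesis q_lt_1 : q < 1.

Lemma hsum_bounds N B : (B <= N)%nat ->
  0 <= hsum q N B /\ hsum q N B * q ^ B <= INR (S N) * q ^ N.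
Proof.
  intros HB. unfold hsum. split.
  - apply sum_from_nonneg. intros. apply qratio_nonneg; assumption.
  - rewrite Rmult_comm, <- sum_from_scal_l.
    eapply Rle_trans; [apply (sum_from_le_const _ _ _ (q ^ N))|].
    + intros b Hb.
      pose proof (qratio_le_pow q q_pos q_lt_1 (N - b)).
      pose proof (qratio_nonneg q q_pos q_lt_1 (N - b)).
      assert (0 < q ^ B) by (apply pow_lt; lra).
      assert (q ^ B * q ^ (N - b) <= q ^ N)
        by (rewrite <- pow_add; apply pow_q_le; auto; lia).
      nra.
    + apply Rmult_le_compat_r; [apply pow_le; lra|apply le_INR; lia].
Qed.

Lemma qnest_hsum_bounds ts M N :
  Exists (fun x => (1 < x)%nat) ts -> (M <= S N)%nat ->
  0 <= qnest q M ts (hsum q (S N)) <= INR (S (S N)) ^ S (length ts) * q ^ S N.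
Proof.
  intros Hex HM.
  assert (Hg : forall B, (B <= M)%nat ->
                 0 <= hsum q (S N) B /\ hsum q (S N) B * q ^ B <= INR (S (S N)) * q ^ S N)
    by (intros; apply hsum_bounds; lia).
  split; [apply qnest_nonneg; auto; intros; apply Hg; lia|].
  eapply Rle_trans; [apply qnest_le_exists; eassumption|].
  replace (INR (S (S N)) ^ S (length ts) * q ^ S N)
    with (INR (S (S N)) ^ length ts * (INR (S (S N)) * q ^ S N)) by (cbn [pow]; ring).
  apply Rmult_le_compat_r.
  - apply Rmult_le_pos; [apply pos_INR|apply pow_le; lra].
  - apply pow_INR_le; lia.
Qed.

Lemma rotation_error_bounds t ts N :
  Exists (fun x => (1 < x)%nat) (t :: ts) ->
  0 <= rotation_error q N (t :: ts) <= 2 * (INR (S (S N)) ^ S (S (length ts)) * q ^ S N).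
Proof.
  intros Hex. unfold rotation_error. rewrite rotation_term_succ. cbn [boundary_term].
  replace (S N - 1)%nat with N by lia.
  assert (Hlast : qnest q (S N) (t :: ts) (hsum q (S N))
                  = qnest q N (t :: ts) (hsum q (S N))
                    + qterm q t (S N) * qnest q N ts (hsum q (S N))).
  { cbn [qnest]. rewrite sum_from_S_r. now replace (1 + N - 1)%nat with N by lia. }
  assert (0 <= qterm q t (S N) * qnest q N ts (hsum q (S N))).
  { apply Rmult_le_pos; [apply qterm_nonneg; auto; lia|].
    apply qnest_nonneg; auto. intros; apply hsum_bounds; lia. }
  pose proof (qnest_hsum_bounds (t :: ts) (S N) N Hex ltac:(lia)).
  pose proof (qnest_hsum_bounds (t :: ts) N N Hex ltac:(lia)).
  assert (Hex' : Exists (fun x => (1 < x)%nat) (ts ++ [t])).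
  { apply Exists_app. inversion Hex; subst; [right; now constructor|now left]. }
  pose proof (qnest_hsum_bounds (ts ++ [t]) N N Hex' ltac:(lia)).
  rewrite length_app, Nat.add_1_r in *. cbn [length] in *. lra.
Qed.

End ErrorBounds.

Section Rotations.

Variable s : list nat.

Definition rotation (j : nat) : list nat :=
  map (fun m => nth ((j + m) mod length s) s 0%nat) (seq 0 (length s)).

Definition rotation_tail (j : nat) : list nat :=
  map (fun m => nth ((j + m) mod length s) s 0%nat) (seq 1 (length s - 1)).

Lemma rotation_cons j : (j < length s)%nat -> rotation j = nth j s 0%nat :: rotation_tail j.
Proof.
  intros Hj. unfold rotation, rotation_tail.
  replace (seq 0 (length s)) with (0%nat :: seq 1 (length s - 1))
    by (destruct (length s); [lia|cbn; now rewrite Nat.sub_0_r]).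
  cbn [map]. now rewrite Nat.add_0_r, Nat.mod_small.
Qed.

Lemma rotation_tail_snoc j : (j < length s)%nat ->
  rotation_tail j ++ [nth j s 0%nat] = rotation (S j).
Proof.
  intros Hj. unfold rotation, rotation_tail.
  replace (seq 0 (length s)) with (seq 0 (S (length s - 1))) by (f_equal; lia).
  rewrite seq_S, map_app, <- seq_shift, map_map. cbn [map]. f_equal.
  - apply map_ext. intros m. now rewrite Nat.add_succ_r.
  - replace (S j + (0 + (length s - 1)))%nat with (j + 1 * length s)%nat by lia.
    now rewrite Nat.Div0.mod_add, Nat.mod_small.
Qed.

Lemma rotation_period : rotation (length s) = rotation 0.
Proof.
  unfold rotation. apply map_ext. intros m.
  now rewrite <- (Nat.Div0.mod_add m 1), Nat.mul_1_l, Nat.add_comm.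
Qed.

Lemma Exists_rotation (P : nat -> Prop) j :
  (j < length s)%nat -> Exists P s -> Exists P (rotation j).
Proof.
  intros Hj Hex. apply Exists_exists in Hex as [x [Hx HPx]].
  apply (In_nth _ _ 0%nat) in Hx as [i [Hi Hix]].
  apply Exists_exists. exists x. split; [|assumption].
  apply in_map_iff. exists ((i + length s - j) mod length s)%nat. split.
  - rewrite Nat.Div0.add_mod_idemp_r.
    replace (j + (i + length s - j))%nat with (i + 1 * length s)%nat by lia.
    now rewrite Nat.Div0.mod_add, Nat.mod_small.
  - apply in_seq. split; [lia|]. apply Nat.mod_upper_bound. lia.
Qed.

Lemma rotation_tail_length j : length (rotation_tail j) = (length s - 1)%nat.
Proof. unfold rotation_tail. now rewrite length_map, length_seq. Qed.

End Rotations.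

Definition cyclic_lhs (F : list nat -> R) (s : list nat) : R :=
  sum_from 0 (length s) (fun j => F ((nth j s 0%nat + 1)%nat :: rotation_tail s j)).

Definition cyclic_rhs (F : list nat -> R) (s : list nat) : R :=
  sum_from 0 (length s) (fun j =>
    sum_from 0 (nth j s 0%nat - 1) (fun k =>
      F ((nth j s 0%nat - k)%nat :: rotation_tail s j ++ [(k + 1)%nat]))).

Definition cyclic_error (q : R) (s : list nat) (N : nat) : R :=
  sum_from 0 (length s) (fun j => rotation_error q N (rotation s j)).

Section CyclicSums.

Variable s : list nat.
Hypothesis s_pos : List.Forall (fun x => (1 <= x)%nat) s.

Let nth_pos (j : nat) : (j < length s)%nat -> (1 <= nth j s 0%nat)%nat.
Proof. intros Hj. rewrite List.Forall_forall in s_pos. apply s_pos, nth_In, Hj. Qed.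

Lemma is_lim_seq_cyclic_sums (u : nat -> list nat -> R) (F : list nat -> R) :
  (forall t ts, (2 <= t)%nat -> is_lim_seq (fun N => u N (t :: ts)) (F (t :: ts))) ->
  is_lim_seq (fun N => cyclic_lhs (u N) s - cyclic_rhs (u N) s) (cyclic_lhs F s - cyclic_rhs F s).
Proof.
  intros Hu. apply is_lim_seq_minus'; apply is_lim_seq_sum_from; intros j Hj.
  - apply Hu. specialize (nth_pos j ltac:(lia)). lia.
  - apply is_lim_seq_sum_from. intros k Hk. apply Hu. lia.
Qed.

Variable q : R.
Hypothesis q_pos : 0 < q.
Hypothesis q_lt_1 : q < 1.

Lemma cyclic_truncated_identity N :
  cyclic_lhs (fun ts => qnest q (S N) ts (fun _ => 1)) s
  - cyclic_rhs (fun ts => qnest q (S N) ts (fun _ => 1)) s = cyclic_error q s N.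
Proof.
  unfold cyclic_lhs, cyclic_rhs, cyclic_error. rewrite <- sum_from_minus.
  rewrite (sum_from_ext 0 (length s) _ (fun j => rotation_error q N (rotation s j)
    + (rotation_term q N (rotation s j) - rotation_term q N (rotation s (S j))))).
  - rewrite sum_from_plus, sum_from_minus.
    rewrite (sum_from_rotate (length s) (fun j => rotation_term q N (rotation s j)))
      by now rewrite rotation_period.
    ring.
  - intros j Hj. rewrite qnest_cyclic_step by (auto; apply nth_pos; lia).
    rewrite <- rotation_tail_snoc, rotation_cons, Nat.add_1_r, Nat.sub_succ, Nat.sub_0_r by lia.
    unfold rotation_error. ring.
Qed.

Hypothesis s_big : Exists (fun x => (1 < x)%nat) s.

Lemma is_lim_seq_cyclic_error : is_lim_seq (cyclic_error q s) 0.
Proof.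
  set (K := S (S (length s - 1))).
  apply is_lim_seq_le_le with (u := fun _ => 0)
    (w := fun N => INR (length s) * (2 * (INR (S (S N)) ^ K * q ^ S N))).
  - intros N.
    assert (Hbound : forall j, (0 <= j < 0 + length s)%nat ->
              0 <= rotation_error q N (rotation s j) <= 2 * (INR (S (S N)) ^ K * q ^ S N)).
    { intros j Hj. rewrite rotation_cons by lia. unfold K. rewrite <- (rotation_tail_length s j).
      apply rotation_error_bounds; auto.
      rewrite <- rotation_cons by lia. apply Exists_rotation; auto; lia. }
    split; [apply sum_from_nonneg|apply sum_from_le_const]; intros j Hj; apply Hbound, Hj.
  - apply is_lim_seq_const.
  - replace (Finite 0) with (Rbar_mult (INR (length s)) (Rbar_mult 2 0)) by (cbn; f_equal; ring).
    apply is_lim_seq_scal_l, is_lim_seq_scal_l.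
    apply (is_lim_seq_incr_1 (fun N => INR (S N) ^ K * q ^ N)).
    apply ex_series_lim_0, ex_series_pow_geometric; assumption.
Qed.

End CyclicSums.

Theorem theorem5p1 (q : R) (s : list nat)
  (hq0 : 0 < q) (hq1 : q < 1)
  (hn : (1 <= length s)%nat)
  (hpos : List.Forall (fun x => (1 <= x)%nat) s)
  (hbig : List.Exists (fun x => (1 < x)%nat) s) :
  let n := length s in
  let tl := fun j => map (fun m => nth ((j + m) mod n) s 0%nat) (seq 1 (n - 1)) in
  fsum n (fun j => qzeta q ((nth j s 0%nat + 1)%nat :: tl j))
  = fsum n (fun j =>
      fsum (nth j s 0%nat - 1) (fun k =>
        qzeta q ((nth j s 0%nat - k)%nat :: tl j ++ [(k + 1)%nat]))).
Proof.
  (* [hn] is implied by [hbig]. *)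
  intros n tl. change (cyclic_lhs (qzeta q) s = cyclic_rhs (qzeta q) s).
  apply Rminus_diag_uniq.
  assert (Hdiff := is_lim_seq_cyclic_sums s hpos (fun N ts => qnest q N ts (fun _ => 1))
                     (qzeta q) (qnest_is_lim_qzeta q hq0 hq1)).
  apply is_lim_seq_incr_1 in Hdiff.
  apply (is_lim_seq_ext _ _ _ (cyclic_truncated_identity s hpos q hq0 hq1)) in Hdiff.
  pose proof (is_lim_seq_cyclic_error s q hq0 hq1 hbig) as Herr.
  apply is_lim_seq_unique in Hdiff, Herr. rewrite Hdiff in Herr. now injection Herr.
Qed.
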